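(* Let \texttt{Mem} be the ABS memory class described in the context. In no reachable state of any valid ABS program that uses (instances of) the class \texttt{Mem} is there a deadlock consisting only of processes running on a single instance of \texttt{Mem}.
   Context: ABS (Abstract Behavioral Specification) is an active object language. Objects communicate only via asynchronous method calls \texttt{f = o!m(args)}: each call creates a new process on the callee object and returns a future \texttt{f}, which the callee resolves with the method's return value when the process terminates. Each object runs at most one process at a time (cooperative scheduling); the active process releases control only by terminating or by suspending at an \texttt{await} statement. \texttt{await b} (b a boolean expression over the object's state) suspends the process until b evaluates to true; \texttt{await f?} suspends until future f is resolved; \texttt{f.get} reads a future and blocks the whole object (no other process of that object may run) until f is resolved. If a class has a method \texttt{Unit run()}, exactly one process executing \texttt{run} is started automatically when the object is created. A process $p_1$ depends on a process $p_2$ if $p_1$ is halted at a \texttt{f.get} or \texttt{await} statement and execution of $p_2$ would allow $p_1$ to continue; a deadlock is a circular dependency between multiple processes. The class \texttt{Mem} (implementing interface \texttt{Memory}) has fields \texttt{mem} (a map from locations to integers), \texttt{list} (a list of pending accesses, each either \texttt{Write(thread, loc, value, id)} or \texttt{Read(thread, loc, id)}), \texttt{counter} (integer), \texttt{done} (set of integers) and \texttt{ret} (map from ids to integers). Its methods are: - \texttt{read(t, loc)}: sets \texttt{myId = counter}, appends \texttt{Read(t, loc, myId)} to \texttt{list}, increments \texttt{counter}, and returns the future of the asynchronous self-call \texttt{this!internalRead(myId)} (no await, no get). - \texttt{internalRead(myId)}: executes \texttt{await contains(done, myId)} and then returns \texttt{lookup(ret, myId)}, with no further side effects. - \texttt{write(t,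 loc, val)}: appends \texttt{Write(t, loc, val, counter)} to \texttt{list} and increments \texttt{counter}. - \texttt{const(i)}: returns \texttt{i}. - \texttt{run()}: an infinite loop whose body executes \texttt{await list != Nil}, then computes (by synchronous local calls to \texttt{strategy}, \texttt{maySwap}, \texttt{getAccess}, \texttt{getValueFor}, which contain no \texttt{await} and no \texttt{get}) an executable access, removes it from \texttt{list}, inserts its id into \texttt{done}, and either updates \texttt{mem} (for a write) or stores the read value in \texttt{ret} (for a read). No method of \texttt{Mem} contains a \texttt{.get} statement, the only \texttt{await} statements are the two boolean-guarded ones in \texttt{run} and \texttt{internalRead}, and \texttt{run} is never called explicitly. *)

(* An operational model of ONE instance of the ABS class Mem,
   its processes, the environment (the rest of an arbitrary ABS program,
   which may call the methods of Mem at any time with any arguments),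
   the dependency relation between its processes, and deadlocks. *)
From Stdlib Require Import ZArith List Arith.
Import ListNotations.
Open Scope Z_scope.
Set Implicit Arguments.

Inductive access (Thread Loc : Type) :=
| AWrite (t : Thread) (l : Loc) (v : Z) (id : Z)
| ARead (t : Thread) (l : Loc) (id : Z).
Arguments AWrite {Thread Loc}.
Arguments ARead {Thread Loc}.

Definition access_id (Thread Loc : Type) (a : access Thread Loc) : Z :=
  match a with AWrite _ _ _ id => id | ARead _ _ id => id end.

(* Object state: the fields of Mem.  ABS maps are association lists
   (lookup = first binding; update = consing a new binding); the set
   [done] is a list of integers (membership = contains). *)
Record fields (Thread Loc : Type) := Fields {
  f_mem     : list (Loc * Z);
  f_list    : list (access Thread Loc);
  f_counter : Z;
  f_done    : list Z;
  f_ret     : list (Z * Z)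
}.
Arguments Fields {Thread Loc}.

Inductive pc (Thread Loc : Type) :=
| RunAwait                                     (* run: at [await list != Nil] (loop head) *)
| ReadStart  (t : Thread) (l : Loc)
| WriteStart (t : Thread) (l : Loc) (v : Z)
| ConstStart (i : Z)
| IRAwait    (id : Z).                         (* internalRead(id): at [await contains(done,id)] *)
Arguments RunAwait {Thread Loc}.
Arguments ConstStart {Thread Loc}.
Arguments IRAwait {Thread Loc}.

Definition guard (Thread Loc : Type) (s : fields Thread Loc) (c : pc Thread Loc) : Prop :=
  match c with
  | RunAwait => f_list s <> nil
  | IRAwait id => In id (f_done s)
  | _ => True
  end.

Definition is_await (Thread Loc : Type) (c : pc Thread Loc) : Prop :=
  match c with RunAwait | IRAwait _ => True | _ => False end.

(* Effect of the loop body of run once the access [a] has been chosen and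
   removed ([rest] is the remaining list); [v] is the value returned by
   getValueFor for a read. *)
Definition perform (Thread Loc : Type) (s : fields Thread Loc)
  (rest : list (access Thread Loc)) (a : access Thread Loc) (v : Z) : fields Thread Loc :=
  match a with
  | AWrite _ l w id => Fields ((l, w) :: f_mem s) rest (f_counter s) (id :: f_done s) (f_ret s)
  | ARead _ _ id => Fields (f_mem s) rest (f_counter s) (id :: f_done s) ((id, v) :: f_ret s)
  end.

(* One atomic segment of a process (from its current control point to its
   next suspension point or termination), NOT checking its guard.
   [seg s c s' oc sp]: new state s', new control point oc (None = terminated),
   spawned process sp.  The strategy of run (strategy/maySwap/getAccess/
   getValueFor) is over-approximated: any pending access may be chosen and
   any value may be read. *)
Inductive seg (Thread Loc : Type) :
  fields Thread Loc -> pc Thread Loc -> fields Thread Loc ->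
  option (pc Thread Loc) -> option (pc Thread Loc) -> Prop :=
| seg_run : forall s l1 a l2 v,
    f_list s = l1 ++ a :: l2 ->
    seg s RunAwait (perform s (l1 ++ l2) a v) (Some RunAwait) None
| seg_read : forall s t l,
    seg s (ReadStart t l)
      (Fields (f_mem s) (f_list s ++ [ARead t l (f_counter s)]) (f_counter s + 1)
              (f_done s) (f_ret s))
      None (Some (IRAwait (f_counter s)))
| seg_write : forall s t l v,
    seg s (WriteStart t l v)
      (Fields (f_mem s) (f_list s ++ [AWrite t l v (f_counter s)]) (f_counter s + 1)
              (f_done s) (f_ret s))
      None None
| seg_const : forall s i, seg s (ConstStart i) s None None
| seg_ir : forall s id, seg s (IRAwait id) s None None.

Record config (Thread Loc : Type) := Config {
  c_fields : fields Thread Loc;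
  c_procs  : list (nat * pc Thread Loc)
}.
Arguments Config {Thread Loc}.

Definition remove_pid (Thread Loc : Type) (p : nat) (ps : list (nat * pc Thread Loc)) :=
  filter (fun x => negb (Nat.eqb (fst x) p)) ps.

Definition fresh (Thread Loc : Type) (q : nat) (ps : list (nat * pc Thread Loc)) : Prop :=
  ~ In q (map fst ps).

(* Processes that other objects of the program may create on the instance
   by asynchronous calls (internalRead is allowed too, which only
   generalizes the model). *)
Definition callable (Thread Loc : Type) (c : pc Thread Loc) : Prop :=
  match c with RunAwait => False | _ => True end.

Inductive step (Thread Loc : Type) : config Thread Loc -> config Thread Loc -> Prop :=
| step_call : forall s ps q c,
    fresh q ps -> callable c ->
    step (Config s ps) (Config s ((q, c) :: ps))
| step_exec : forall s ps p c s' oc sp ps1 ps2,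
    In (p, c) ps -> guard s c -> seg s c s' oc sp ->
    ps1 = match oc with
          | Some c' => (p, c') :: remove_pid p ps
          | None => remove_pid p ps
          end ->
    (match sp with
     | None => ps2 = ps1
     | Some d => exists q, fresh q ps1 /\ ps2 = (q, d) :: ps1
     end) ->
    step (Config s ps) (Config s' ps2).

Inductive reachable (Thread Loc : Type) (init : fields Thread Loc) :
  config Thread Loc -> Prop :=
| reach_init : reachable init (Config init [(0%nat, RunAwait)])
| reach_step : forall C C', reachable init C -> step C C' -> reachable init C'.

Inductive run_alone (Thread Loc : Type) :
  fields Thread Loc -> option (pc Thread Loc) -> fields Thread Loc -> Prop :=
| alone_refl : forall s o, run_alone s o s
| alone_step : forall s c s1 o1 sp s2,
    seg s c s1 o1 sp -> run_alone s1 o1 s2 -> run_alone s (Some c) s2.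

Definition halted (Thread Loc : Type) (s : fields Thread Loc) (c : pc Thread Loc) : Prop :=
  is_await c /\ ~ guard s c.

Definition depends (Thread Loc : Type) (C : config Thread Loc) (p1 p2 : nat) : Prop :=
  exists c1 c2,
    In (p1, c1) (c_procs C) /\ In (p2, c2) (c_procs C) /\
    halted (c_fields C) c1 /\
    exists s', run_alone (c_fields C) (Some c2) s' /\ guard s' c1.

Definition deadlock (Thread Loc : Type) (C : config Thread Loc) : Prop :=
  exists cyc : list nat,
    (2 <= length cyc)%nat /\ NoDup cyc /\
    forall i, (i < length cyc)%nat ->
      depends C (nth i cyc 0%nat) (nth ((i + 1) mod length cyc) cyc 0%nat).

From Stdlib Require Import List Arith Lia.
Set Implicit Arguments.

(* Every process that depends on another is halted at an await, and a halted
   process of Mem cannot change the object state even when run alone: run is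
   halted only when [list] is empty, so it finds no access to perform, and
   internalRead has no side effects.  Hence nothing depends on a process that
   itself depends on something, which already rules out a dependency chain of
   length two, let alone a cycle.  Process identifiers stay unique along every
   execution, so the control point of a process is well defined. *)

Lemma map_fst_remove_pid (Thread Loc : Type) (p : nat) (ps : list (nat * pc Thread Loc)) :
  map fst (remove_pid p ps) = filter (fun q => negb (Nat.eqb q p)) (map fst ps).
Proof. unfold remove_pid; rewrite filter_map_swap; reflexivity. Qed.

Lemma NoDup_remove_pid (Thread Loc : Type) (p : nat) (ps : list (nat * pc Thread Loc)) :
  NoDup (map fst ps) -> NoDup (map fst (remove_pid p ps)).
Proof. rewrite map_fst_remove_pid; apply NoDup_filter. Qed.

Lemma fresh_remove_pid (Thread Loc : Type) (p : nat) (ps : list (nat * pc Thread Loc)) :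
  fresh p (remove_pid p ps).
Proof.
  unfold fresh; rewrite map_fst_remove_pid, filter_In, Nat.eqb_refl; simpl.
  intros [_ H]; discriminate.
Qed.

Lemma step_NoDup_pids (Thread Loc : Type) (C C' : config Thread Loc) :
  step C C' -> NoDup (map fst (c_procs C)) -> NoDup (map fst (c_procs C')).
Proof.
  intros Hstep Hnd; destruct Hstep as [s ps q c Hq _ | s ps p c s' oc sp ps1 ps2 _ _ _ Hps1 Hps2];
    simpl in *.
  - now constructor.
  - assert (Hnd1 : NoDup (map fst ps1)).
    { subst ps1; destruct oc; simpl.
      - constructor; [apply fresh_remove_pid | now apply NoDup_remove_pid].
      - now apply NoDup_remove_pid. }
    destruct sp as [d|]; [destruct Hps2 as [q [Hq ->]]; simpl; now constructor|].
    now subst.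
Qed.

Lemma reachable_NoDup_pids (Thread Loc : Type) (init : fields Thread Loc) (C : config Thread Loc) :
  reachable init C -> NoDup (map fst (c_procs C)).
Proof.
  induction 1 as [|C C' _ IH Hstep].
  - repeat constructor; simpl; tauto.
  - exact (step_NoDup_pids Hstep IH).
Qed.

Lemma NoDup_map_fst_In_eq {A B : Type} {ps : list (A * B)} {x : A} {a b : B} :
  NoDup (map fst ps) -> In (x, a) ps -> In (x, b) ps -> a = b.
Proof.
  induction ps as [|[y c] ps IH]; simpl; intros Hnd Ha Hb; [tauto|].
  inversion Hnd as [|? ? Hy Hnd']; subst.
  destruct Ha as [Ha|Ha], Hb as [Hb|Hb].
  - congruence.
  - injection Ha as <- <-; exfalso; apply Hy, in_map_iff; exists (y, b); auto.
  - injection Hb as <- <-; exfalso; apply Hy, in_map_iff; exists (y, a); auto.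
  - eauto.
Qed.

Lemma run_alone_halted (Thread Loc : Type) (s s' : fields Thread Loc) (c : pc Thread Loc) :
  halted s c -> run_alone s (Some c) s' -> s' = s.
Proof.
  intros [Hawait Hguard] Hrun.
  inversion Hrun as [|? ? s1 o1 sp ? Hseg Hrest]; subst; [reflexivity|].
  destruct c; simpl in Hawait; try contradiction; inversion Hseg; subst.
  - exfalso; apply Hguard; simpl.
    match goal with Hl : f_list _ = _ |- _ => rewrite Hl end.
    now destruct l1.
  - now inversion Hrest.
Qed.

Lemma no_depends_on_halted (Thread Loc : Type) (C : config Thread Loc) (p q : nat) (c : pc Thread Loc) :
  NoDup (map fst (c_procs C)) -> In (p, c) (c_procs C) -> halted (c_fields C) c ->
  ~ depends C q p.
Proof.
  intros Hnd Hp Hhalt [c1 [c2 [_ [Hp' [[_ Hguard] [s' [Hrun Hguard']]]]]]].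
  rewrite (NoDup_map_fst_In_eq Hnd Hp' Hp) in Hrun.
  rewrite (run_alone_halted Hhalt Hrun) in Hguard'.
  exact (Hguard Hguard').
Qed.

Theorem lemma1 (Thread Loc : Type) (init : fields Thread Loc) (C : config Thread Loc) :
  reachable init C -> ~ deadlock C.
Proof.
  intros Hreach [cyc [Hlen [_ Hdep]]].
  assert (Hdep0 := Hdep 0%nat ltac:(lia)).
  assert (Hdep1 := Hdep 1%nat ltac:(lia)).
  rewrite Nat.add_0_l, Nat.mod_small in Hdep0 by lia.
  destruct Hdep1 as [c1 [_ [Hin1 [_ [Hhalt1 _]]]]].
  exact (no_depends_on_halted (reachable_NoDup_pids Hreach) Hin1 Hhalt1 Hdep0).
Qed.
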